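(* Let $m\geq 13$ and $n\geq 13$ be integers with $m\equiv 2 \pmod 3$ and $n\equiv 2\pmod 3$. Then $\gamma_{sR}(C_m\vee C_n)=2$.
   Context: $C_n$ denotes the cycle on $n$ vertices. For a graph $G=(V,E)$ and $x\in V$, $N_G[x]=\{x\}\cup\{y: xy\in E\}$. A signed Roman dominating function (SRDF) on $G$ is a function $f:V\to\{-1,1,2\}$ such that (a) $\sum_{y\in N_G[x]}f(y)\geq 1$ for every $x\in V$, and (b) every vertex $x$ with $f(x)=-1$ is adjacent to at least one vertex $y$ with $f(y)=2$. The weight of $f$ is $\sum_{x\in V}f(x)$, and $\gamma_{sR}(G)$ is the minimum weight of an SRDF on $G$. The join $G_1\vee G_2$ of two graphs has vertex set $V(G_1)\cup V(G_2)$ (disjoint union) and edge set $E(G_1)\cup E(G_2)\cup\{uv: u\in V(G_1), v\in V(G_2)\}$. *)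

From mathcomp Require Import all_boot all_order all_algebra.
Set Implicit Arguments. Unset Strict Implicit. Unset Printing Implicit Defensive.
Import Order.TTheory GRing.Theory Num.Theory.
Local Open Scope ring_scope.

Definition cycle_adj (n : nat) : rel 'I_n :=
  fun i j => (i != j) && ((j == (i.+1 %% n)%N :> nat) || (i == (j.+1 %% n)%N :> nat)).

Definition join_adj (T1 T2 : finType) (e1 : rel T1) (e2 : rel T2) : rel (T1 + T2)%type :=
  fun u v => match u, v with
             | inl a, inl b => e1 a b
             | inr a, inr b => e2 a b
             | _, _ => true
             end.

Definition closed_nbhd (T : finType) (e : rel T) (x : T) : {set T} :=
  [set y | (y == x) || e x y].

Definition weight (T : finType) (f : T -> int) : int := \sum_(x : T) f x.

Definition is_SRDF (T : finType) (e : rel T) (f : T -> int) : Prop :=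
  (forall x, f x \in [:: -1; 1; 2]) /\
  (forall x, 1 <= \sum_(y in closed_nbhd e x) f y) /\
  (forall x, f x = -1 -> exists2 y, e x y & f y = 2).

Definition gamma_sR_is (T : finType) (e : rel T) (k : int) : Prop :=
  (exists f, is_SRDF e f /\ weight f = k) /\
  (forall f, is_SRDF e f -> k <= weight f).

(* Lower bound: summing the closed-neighbourhood condition over the vertices of one cycle
   counts each of its vertices three times and each vertex of the other cycle [m] times, so
   the weights [A], [B] of the two sides satisfy [m <= 3 A + m B] and [n <= 3 B + n A].
   If one of [A], [B] is non-positive these force [3 (A + B) >= 4], otherwise [A, B >= 1].
   Upper bound: label each cycle [2, -1, -1, 2, -1, -1, ..., 2, -1]; when the length is
   [2 mod 3] every closed neighbourhood within a cycle has sum [>= 0], each side has weight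
   [1], and every vertex sees the vertex labelled [2] of the other side. *)

From mathcomp Require Import all_boot all_order all_algebra zify.
Import Order.TTheory GRing.Theory Num.Theory.

Set Implicit Arguments.
Unset Strict Implicit.
Unset Printing Implicit Defensive.

Local Open Scope ring_scope.

Section Cycle.

Variable n : nat.

Lemma succ_modn (x : nat) : (x < n)%N -> (x.+1 %% n = if x.+1 == n then 0 else x.+1)%N.
Proof. by move=> lt_xn; case: eqP => [->|ne]; [rewrite modnn | rewrite modn_small; lia]. Qed.

Lemma pred_modn (x : nat) : (x < n)%N -> ((x + n).-1 %% n = if x == 0 then n.-1 else x.-1)%N.
Proof.
move=> lt_xn; case: eqP => [->|ne]; first by rewrite add0n modn_small; lia.
have -> : ((x + n).-1 = x.-1 + n)%N by lia.
by rewrite modnDr modn_small; lia.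
Qed.

Lemma sum_rotations (V : nmodType) (g : 'I_n -> V) :
  \sum_x (g x + g (ordS x) + g (ord_pred x)) = (\sum_x g x) *+ 3.
Proof.
have sumS : \sum_x g (ordS x) = \sum_x g x by rewrite [RHS](reindex_inj (@ordS_inj n)).
have sumP : \sum_x g (ord_pred x) = \sum_x g x.
  by rewrite [RHS](reindex_inj (@ord_pred_inj n)).
by rewrite !big_split /= sumS sumP !mulrS mulr0n addr0 !addrA.
Qed.

Lemma cycle_double_count (g : 'I_n -> int) (c : int) :
    (forall x, 1 <= g x + g (ordS x) + g (ord_pred x) + c) ->
  n%:R <= (\sum_x g x) *+ 3 + c *+ n.
Proof.
move=> local_ge1.
have : \sum_(x : 'I_n) (1 : int) <= \sum_x (g x + g (ordS x) + g (ord_pred x) + c).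
  by apply: ler_sum => x _; exact: local_ge1.
by rewrite big_split /= sum_rotations !sumr_const card_ord -natr1E.
Qed.

Hypothesis n_gt2 : (2 < n)%N.

Lemma cycle_adjE (x y : 'I_n) : cycle_adj x y = (y == ordS x) || (y == ord_pred x).
Proof.
rewrite /cycle_adj -!(inj_eq val_inj) /= !succ_modn // pred_modn //.
have := ltn_ord x; have := ltn_ord y.
case: (eqVneq x.+1 n) => ? /=; case: (eqVneq (y : nat).+1 n) => ? /=;
  case: (eqVneq (x : nat) 0) => ? /=; repeat case: eqP => ?; lia.
Qed.

Lemma closed_nbhd_cycle (x : 'I_n) :
  closed_nbhd (@cycle_adj n) x = x |: [set ordS x; ord_pred x].
Proof. by apply/setP => y; rewrite !inE cycle_adjE. Qed.

Lemma sum_closed_nbhd_cycle (V : nmodType) (g : 'I_n -> V) x :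
  \sum_(y in closed_nbhd (@cycle_adj n) x) g y = g x + g (ordS x) + g (ord_pred x).
Proof.
have [neS neP nSP] : [/\ x != ordS x, x != ord_pred x & ordS x != ord_pred x].
  rewrite -!(inj_eq val_inj) /= succ_modn // pred_modn //; have := ltn_ord x.
  case: (eqVneq x.+1 n) => ? /=; case: (eqVneq (x : nat) 0) => ? /=;
    split; repeat case: eqP => ?; lia.
rewrite closed_nbhd_cycle big_setU1 /=; last by rewrite !inE negb_or neS neP.
by rewrite big_setU1 /= ?inE // big_set1 addrA.
Qed.

End Cycle.

Section Join.

Variables (T1 T2 : finType) (e1 : rel T1) (e2 : rel T2).

Definition join_fun (f1 : T1 -> int) (f2 : T2 -> int) (v : T1 + T2) : int :=
  match v with inl x => f1 x | inr y => f2 y end.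

Lemma weight_join (f : T1 + T2 -> int) :
  weight f = weight (fun x => f (inl x)) + weight (fun y => f (inr y)).
Proof. exact: big_sumType. Qed.

Lemma sum_closed_nbhd_joinl (f : T1 + T2 -> int) x :
  \sum_(v in closed_nbhd (join_adj e1 e2) (inl x)) f v =
  \sum_(y in closed_nbhd e1 x) f (inl y) + weight (fun y => f (inr y)).
Proof.
by rewrite big_sumType; congr (_ + _); apply: eq_bigl => y; rewrite !inE /=.
Qed.

Lemma sum_closed_nbhd_joinr (f : T1 + T2 -> int) y :
  \sum_(v in closed_nbhd (join_adj e1 e2) (inr y)) f v =
  \sum_(z in closed_nbhd e2 y) f (inr z) + weight (fun x => f (inl x)).
Proof.
by rewrite big_sumType addrC; congr (_ + _); apply: eq_bigl => z; rewrite !inE /=.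
Qed.

Lemma is_SRDF_join (f1 : T1 -> int) (f2 : T2 -> int) (x2 : T1) (y2 : T2) :
    (forall x, f1 x \in [:: -1; 1; 2]) -> (forall y, f2 y \in [:: -1; 1; 2]) ->
    (forall x, 1 <= \sum_(z in closed_nbhd e1 x) f1 z + weight f2) ->
    (forall y, 1 <= \sum_(z in closed_nbhd e2 y) f2 z + weight f1) ->
    f1 x2 = 2 -> f2 y2 = 2 ->
  is_SRDF (join_adj e1 e2) (join_fun f1 f2).
Proof.
move=> f1_vals f2_vals nbhd1 nbhd2 f1x2 f2y2; split; last split.
- by case.
- by case=> [x|y]; rewrite ?sum_closed_nbhd_joinl ?sum_closed_nbhd_joinr.
- by case=> [x|y] _; [exists (inr y2) | exists (inl x2)].
Qed.

End Join.

Lemma two_le_add_of_double_count (m n : nat) (A B : int) : (3 < m)%N -> (3 < n)%N ->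
  m%:R <= A *+ 3 + B *+ m -> n%:R <= B *+ 3 + A *+ n -> 2 <= A + B.
Proof.
move=> m_gt3 n_gt3 count_m count_n.
have [B_le0|B_gt0] := lerP B 0.
  have : B *+ m <= B *+ 3 by rewrite ler_wnMn2l // ltnW.
  lia.
have [A_le0|A_gt0] := lerP A 0.
  have : A *+ n <= A *+ 3 by rewrite ler_wnMn2l // ltnW.
  lia.
lia.
Qed.

Lemma weight_SRDF_join_cycle_ge2 (m n : nat) (f : 'I_m + 'I_n -> int) :
    (3 < m)%N -> (3 < n)%N ->
    is_SRDF (join_adj (@cycle_adj m) (@cycle_adj n)) f ->
  2 <= weight f.
Proof.
move=> m_gt3 n_gt3 [_ [nbhd_ge1 _]].
have /ltnW m_gt2 := m_gt3; have /ltnW n_gt2 := n_gt3.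
rewrite weight_join; apply: (two_le_add_of_double_count m_gt3 n_gt3).
- apply: cycle_double_count => x; have := nbhd_ge1 (inl x).
  by rewrite sum_closed_nbhd_joinl sum_closed_nbhd_cycle.
- apply: cycle_double_count => y; have := nbhd_ge1 (inr y).
  by rewrite sum_closed_nbhd_joinr sum_closed_nbhd_cycle.
Qed.

Definition mod3_pattern (i : nat) : int := if (i %% 3 == 0)%N then 2 else -1.

Lemma weight_mod3_pattern (n : nat) : (n %% 3 = 2)%N ->
  weight (fun i : 'I_n => mod3_pattern i) = 1.
Proof.
move=> n_mod3; rewrite /weight -(big_mkord xpredT mod3_pattern).
have -> : n = (3 * (n %/ 3) + 2)%N by lia.
elim: (n %/ 3)%N => [|k IHk]; first by rewrite big_nat_recr //= big_nat_recr //= big_geq.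
have -> : (3 * k.+1 + 2 = (3 * k + 2).+3)%N by lia.
rewrite !big_nat_recr //= IHk /mod3_pattern.
have -> : ((3 * k + 2) %% 3 = 2)%N by lia.
have -> : ((3 * k + 2).+1 %% 3 = 0)%N by lia.
by have -> : ((3 * k + 2).+2 %% 3 = 1)%N by lia.
Qed.

(* Three cyclically consecutive vertices contain a multiple of [3]: either they do not wrap
   around, or they contain [0]. *)
Lemma mod3_pattern_window_ge0 (n : nat) (x : 'I_n) :
  0 <= mod3_pattern x + mod3_pattern (ordS x) + mod3_pattern (ord_pred x).
Proof.
rewrite /= succ_modn // pred_modn // /mod3_pattern; have := ltn_ord x.
case: (eqVneq x.+1 n) => ? /=; case: (eqVneq (x : nat) 0) => ? /=;
  repeat case: eqP => ?; lia.
Qed.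

Lemma is_SRDF_join_cycle_mod3_pattern (m n : nat) :
    (2 < m)%N -> (2 < n)%N -> (m %% 3 = 2)%N -> (n %% 3 = 2)%N ->
  is_SRDF (join_adj (@cycle_adj m) (@cycle_adj n))
    (join_fun (fun i : 'I_m => mod3_pattern i) (fun j : 'I_n => mod3_pattern j)).
Proof.
move=> m_gt2 n_gt2 m_mod3 n_mod3.
have vals k : mod3_pattern k \in [:: -1; 1; 2] by rewrite /mod3_pattern; case: ifP.
apply: (is_SRDF_join (x2 := Ordinal (ltnW (ltnW m_gt2)))
                     (y2 := Ordinal (ltnW (ltnW n_gt2)))) => //.
- move=> x; rewrite sum_closed_nbhd_cycle // weight_mod3_pattern // lerDr.
  exact: mod3_pattern_window_ge0.
- move=> y; rewrite sum_closed_nbhd_cycle // weight_mod3_pattern // lerDr.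
  exact: mod3_pattern_window_ge0.
Qed.

Theorem mainTheorem8 (m n : nat) :
  (13 <= m)%N -> (13 <= n)%N -> (m %% 3 = 2)%N -> (n %% 3 = 2)%N ->
  gamma_sR_is (join_adj (@cycle_adj m) (@cycle_adj n)) 2.
Proof.
move=> m_ge13 n_ge13 m_mod3 n_mod3.
have m_gt3 : (3 < m)%N by lia.
have n_gt3 : (3 < n)%N by lia.
split; last by move=> f; exact: weight_SRDF_join_cycle_ge2.
eexists; split.
  exact: is_SRDF_join_cycle_mod3_pattern (ltnW m_gt3) (ltnW n_gt3) m_mod3 n_mod3.
by rewrite weight_join !weight_mod3_pattern.
Qed.
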